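(* For all integers $k,l\ge1$, $La^*([k]\times[l],\vee_2)=k+l-1$.
   Context: $[k]\times[l]$ is ordered coordinatewise. $\vee_2$ is the poset on three elements $a,b_1,b_2$ whose only relations are $a<b_1$, $a<b_2$. For posets $P,R$, $P$ is a strong subposet of $R$ if there is an injection $i:P\to R$ with $p\le_P p'\iff i(p)\le_R i(p')$. A subset $F\subseteq Q$ is strong $P$-free if $P$ is not a strong subposet of $F$ with the induced order; $La^*(Q,P)$ is the maximum size of a strong $P$-free subset of $Q$. *)

From mathcomp Require Import all_boot all_order.
Set Implicit Arguments. Unset Strict Implicit. Unset Printing Implicit Defensive.

Definition grid_le (k l : nat) : rel ('I_k * 'I_l) :=
  fun x y => (x.1 <= y.1)%N && (x.2 <= y.2)%N.

(* The poset vee_2 on three elements a = 0, b1 = 1, b2 = 2, whose only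
   relations (besides reflexivity) are a < b1 and a < b2. *)
Definition vee2_le : rel 'I_3 :=
  fun p q => (p == q) || (nat_of_ord p == 0%N).

Definition strong_subposet (P R : finType) (leP : rel P) (leR : rel R)
    (F : {set R}) : Prop :=
  exists i : P -> R, injective i /\ (forall p, i p \in F) /\
    (forall p p', leP p p' = leR (i p) (i p')).

Definition strong_free (P R : finType) (leP : rel P) (leR : rel R)
    (F : {set R}) : Prop := ~ strong_subposet leP leR F.

(* La*(Q,P) = m  :  m is the maximum size of a strong P-free subset of Q. *)
Definition is_La_star (P R : finType) (leP : rel P) (leR : rel R) (m : nat)
  : Prop :=
  (exists F : {set R}, strong_free leP leR F /\ #|F| = m) /\
  (forall F : {set R}, strong_free leP leR F -> (#|F| <= m)%N).

(** A strong copy of [vee2] is a triple [a <= b], [a <= c] with [b] and [c]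
   incomparable, so in a strong [vee2]-free subset [F] of the grid the elements
   above any fixed element form a chain.  Call an element of [F] dominated if
   [F] has a larger element in its column.  The undominated elements lie in
   distinct columns.  The dominated ones lie in distinct rows: if [(i, j)] and
   [(i', j)] with [i <= i'] are both in [F] and [(i, j') \in F] with [j' > j],
   then [(i, j')] and [(i', j)] are incomparable elements above [(i, j)]
   unless [i = i'].  No dominated element is in the top row, hence
   [|F| <= k + (l - 1)].  The hook formed by the bottom row and the last
   column is a chain of this size. *)

From mathcomp Require Import all_boot all_order.

Set Implicit Arguments.
Unset Strict Implicit.
Unset Printing Implicit Defensive.

Section StrongVee2.
Variables (T : finType) (le : rel T).

Definition chain (F : {set T}) := {in F &, forall x y, le x y || le y x}.

Definition chain_upsets (F : {set T}) :=
  forall a, a \in F -> chain [set x in F | le a x].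

Lemma chain_strong_vee2_free F : chain F -> strong_free vee2_le le F.
Proof.
move=> chF [i [_ [iF ile]]].
have := chF _ _ (iF (@Ordinal 3 1 isT)) (iF (@Ordinal 3 2 isT)).
by rewrite -!ile.
Qed.

Hypotheses (le_refl : reflexive le) (le_trans : transitive le).

Lemma strong_vee2_free_chain_upsets F :
  strong_free vee2_le le F -> chain_upsets F.
Proof.
move=> freeF a aF b c; rewrite !inE => /andP[bF ab] /andP[cF ac].
apply/negPn/negP; rewrite negb_or => /andP[nbc ncb]; apply: freeF.
have nba : ~~ le b a by apply: contra nbc => ba; apply: le_trans ba ac.
have nca : ~~ le c a by apply: contra ncb => ca; apply: le_trans ca ab.
have neab : a != b by apply: contraNneq nbc => <-.
have neac : a != c by apply: contraNneq ncb => <-.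
have nebc : b != c by apply: contraNneq nbc => ->.
exists (fun p : 'I_3 => nth a [:: a; b; c] p); split; [|split].
- move=> [[|[|[|p]]] ?] // [[|[|[|q]]] ?] //= eq_pq; apply/val_inj => //=;
    by move: neab neac nebc; rewrite eq_pq eqxx.
- by move=> [[|[|[|p]]] ?].
- move=> [[|[|[|p]]] ?] // [[|[|[|q]]] ?] //;
    by rewrite /vee2_le /= ?le_refl ?(negbTE nba) ?(negbTE nca)
               ?(negbTE nbc) ?(negbTE ncb).
Qed.
End StrongVee2.

Section Grid.
Variables k l : nat.
Implicit Types (F : {set 'I_k * 'I_l}) (x y : 'I_k * 'I_l).

Lemma grid_le_refl : reflexive (@grid_le k l).
Proof. by move=> x; rewrite /grid_le !leqnn. Qed.

Lemma grid_le_trans : transitive (@grid_le k l).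
Proof.
move=> y x z /andP[xy1 xy2] /andP[yz1 yz2].
by rewrite /grid_le (leq_trans xy1 yz1) (leq_trans xy2 yz2).
Qed.

Definition col_dominated F :=
  [set x : 'I_k * 'I_l | [exists y in F, (y.1 == x.1) && (x.2 < y.2)]].

Lemma col_undominated_fst_inj F : {in F :\: col_dominated F &, injective fst}.
Proof.
have undominated_max x y :
    x \notin col_dominated F -> y \in F -> y.1 = x.1 -> y.2 <= x.2.
  move=> xD yF eq1; rewrite leqNgt; apply: contra xD => lt2.
  by rewrite inE; apply/exists_inP; exists y; rewrite ?eq1 ?eqxx.
move=> x y /setDP[xF xD] /setDP[yF yD] eq1.
apply: injective_projections => //; apply/val_inj/anti_leq.
by rewrite undominated_max // undominated_max.
Qed.

Lemma col_dominated_snd_inj F :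
  chain_upsets (@grid_le k l) F -> {in F :&: col_dominated F &, injective snd}.
Proof.
move=> upsF.
suff eq_le1 x x' : x \in F :&: col_dominated F -> x' \in F ->
    x.2 = x'.2 -> x.1 <= x'.1 -> x = x'.
  move=> x x' xD x'D eq2; have [le1|/ltnW le1] := leqP x.1 x'.1.
    by apply: eq_le1 => //; case/setIP: x'D.
  by apply/esym/eq_le1 => //; case/setIP: xD.
case/setIP=> xF; rewrite inE => /exists_inP[y yF /andP[/eqP y1 lt2]].
move=> x'F eq2 le1.
have := upsF x xF y x'; rewrite !inE yF x'F /grid_le y1 -eq2 le1 (ltnW lt2).
rewrite (leqNgt y.2) lt2 !leqnn /= andbT => /(_ isT isT) x'1.
by apply: injective_projections => //; apply/val_inj/anti_leq; rewrite le1.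
Qed.

End Grid.

Lemma col_dominated_snd_neq_max k l (F : {set 'I_k * 'I_l.+1}) x :
  x \in col_dominated F -> x.2 != ord_max.
Proof.
rewrite inE => /exists_inP[y _ /andP[_ lt2]].
by rewrite -val_eqE /= neq_ltn (leq_trans lt2) // -ltnS.
Qed.

Lemma card_chain_upsets_grid k l (F : {set 'I_k * 'I_l.+1}) :
  chain_upsets (@grid_le k l.+1) F -> #|F| <= k + l.
Proof.
move=> upsF; rewrite -(cardsID (col_dominated F) F) addnC.
apply: leq_add.
- rewrite -(card_in_imset (@col_undominated_fst_inj _ _ F)).
  by rewrite -[leqRHS]card_ord max_card.
- rewrite -(card_in_imset (col_dominated_snd_inj upsF)).
  apply: (@leq_trans #|[set~ (ord_max : 'I_l.+1)]|); last first.
    by rewrite cardsC1 card_ord.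
  apply/subset_leq_card/subsetP => _ /imsetP[x /setIP[_ xD] ->].
  by rewrite !inE (col_dominated_snd_neq_max xD).
Qed.

Definition hook m n : {set 'I_m.+1 * 'I_n.+1} :=
  [set (i, ord0) | i : 'I_m.+1] :|: [set (ord_max, j) | j : 'I_n.+1].

Lemma hook_chain m n : chain (@grid_le m.+1 n.+1) (hook m n).
Proof.
have row_le_col (i : 'I_m.+1) (j : 'I_n.+1) : grid_le (i, ord0) (ord_max, j).
  by rewrite /grid_le /= -ltnS ltn_ord.
move=> _ _ /setUP[] /imsetP[i _ ->] /setUP[] /imsetP[j _ ->].
- by rewrite /grid_le /= leqnn !andbT leq_total.
- by rewrite row_le_col.
- by rewrite row_le_col orbT.
- by rewrite /grid_le /= leqnn leq_total.
Qed.

Lemma card_hook m n : #|hook m n| = m.+1 + n.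
Proof.
have row_col :
    [set (i, ord0) | i : 'I_m.+1] :&: [set (ord_max, j) | j : 'I_n.+1]
    = [set (ord_max, ord0)].
  apply/setP => -[i j]; rewrite !inE; apply/andP/eqP.
    by case=> /imsetP[? _ [-> ->]] /imsetP[? _ [-> _]].
  by case=> -> ->; split; apply/imsetP; eexists.
rewrite cardsU row_col cards1 !card_imset ?card_ord ?addnS ?subn1 //.
all: by move=> ? ? [].
Qed.

Theorem theorem1p5 (k l : nat) (hk : (1 <= k)%N) (hl : (1 <= l)%N) :
  is_La_star vee2_le (@grid_le k l) (k + l - 1).
Proof.
case: k hk => // m _; case: l hl => // n _; rewrite addnS subn1 /=.
split.
  exists (hook m n); rewrite card_hook; split=> //.
  exact/chain_strong_vee2_free/hook_chain.
move=> F /strong_vee2_free_chain_upsets upsF.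
exact/card_chain_upsets_grid/upsF/grid_le_trans/grid_le_refl.
Qed.
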